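(* Let $k$ be a perfect field of characteristic $p>2$, $N\ge2$ with $p\nmid N+1$, let $\eta\in W_2(k)$ and $\lambda=\eta\bmod p\in k$. If $\mathbb{HD}^{p-1}_{N+1}(\lambda)\ne0$, then $\mathbb{HD}^{2p-1}_{N+1}(\eta)$ is invertible in $W_2(k)$, so the fraction $\mathbb{HD}^{p-1}_{N+1}(\eta)/\mathbb{HD}^{2p-1}_{N+1}(\eta)\in W_2(k)$ is well defined, and it depends only on $\lambda$.
   Context: $\mathbb{HD}^P_M(X)=\sum_{i=0}^{[P/M]}c_i(-M)^{P-iM}X^{iM}\in\mathbb{Z}[X]$ with $c_i=\binom{P}{i}\binom{P-i}{i}\cdots\binom{P-(M-1)i}{i}$ (the Hasse--Dwork polynomial), evaluated in $k$ or $W_2(k)$. *)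

(* Witt vectors of length 2 over a field k of characteristic p,
   represented concretely as pairs of Witt components (a0, a1). *)
From HB Require Import structures.
From mathcomp Require Import all_boot all_order all_algebra.
Set Implicit Arguments. Unset Strict Implicit. Unset Printing Implicit Defensive.
Import Order.TTheory GRing.Theory Num.Theory.
Local Open Scope ring_scope.

Section W2.
Variables (k : fieldType) (p : nat).

Definition W2 := (k * k)%type.

Definition w2zero : W2 := (0, 0).
Definition w2one : W2 := (1, 0).

(* Witt addition: S_1(a,b) = a1 + b1 + (a0^p + b0^p - (a0+b0)^p)/p *)
Definition w2add (x y : W2) : W2 :=
  (x.1 + y.1,
   x.2 + y.2 - \sum_(1 <= i < p) ('C(p, i) %/ p)%:R * x.1 ^+ i * y.1 ^+ (p - i)).

Definition w2mul (x y : W2) : W2 :=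
  (x.1 * y.1, x.1 ^+ p * y.2 + y.1 ^+ p * x.2).

(* Witt negation; componentwise negation is correct for odd p *)
Definition w2opp (x : W2) : W2 := (- x.1, - x.2).

Definition w2nat (n : nat) : W2 := iter n (w2add w2one) w2zero.

Definition w2exp (x : W2) (n : nat) : W2 := iter n (w2mul x) w2one.

Definition w2sign (e : nat) : W2 := if odd e then w2opp w2one else w2one.

Definition w2unit (x : W2) : Prop := exists u : W2, w2mul x u = w2one.

End W2.

Definition HD_coef (P M i : nat) : nat := \prod_(j < M) 'C(P - j * i, i).

Definition HDk (k : fieldType) (P M : nat) (x : k) : k :=
  \sum_(i < (P %/ M).+1)
     (HD_coef P M i)%:R * (- (M%:R)) ^+ (P - i * M) * x ^+ (i * M).

Definition HDW (k : fieldType) (p P M : nat) (x : W2 k) : W2 k :=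
  foldr (@w2add k p) (@w2zero k)
    [seq @w2mul k p (@w2sign k (P - i * M))
        (@w2mul k p (@w2nat k p (HD_coef P M i * M ^ (P - i * M))) (@w2exp k p x (i * M)))
     | i <- iota 0 (P %/ M).+1].

Definition perfect_field (k : fieldType) (p : nat) : Prop :=
  forall x : k, exists y : k, y ^+ p = x.

(* Modulo p the Hasse-Dwork polynomials satisfy HD^{2p-1}_M = -M HD^{p-1}_M in
   k[X]: every index i is < p, so the factors of c_i obey C(n + p, i) = C(n, i)
   mod p, and (-M)^p = -M.  In W_2(k) the first component of HD(eta) is
   HD(lambda), and two lifts eta, eta' of lambda give values whose second
   components differ by HD'(lambda)^p (eta_1 - eta'_1).  Hence h := HD^{2p-1}_M
   has the unit first component -M HD^{p-1}_M(lambda), and with g := HD^{p-1}_M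
   we get h(eta) - h(eta') = [-M] (g(eta) - g(eta')), which is exactly what
   makes g/h independent of the lift. *)
From HB Require Import structures.
From mathcomp Require Import all_boot all_order all_algebra.
From mathcomp Require Import ring zify.
Import GRing.Theory.
Local Open Scope ring_scope.

Section W2Arithmetic.
Variables (k : fieldType) (p : nat).
Implicit Types (x g h u : W2 k).

Lemma w2nat_fst n : (w2nat k p n).1 = n%:R.
Proof. by elim: n => [|n IHn] //=; rewrite IHn mulrS. Qed.

Lemma w2sign_fst e : (w2sign k e).1 = (-1) ^+ e.
Proof. by rewrite /w2sign -signr_odd; case: odd; rewrite /= ?expr1 ?expr0. Qed.

Lemma w2sign_snd e : (w2sign k e).2 = 0.
Proof. by rewrite /w2sign; case: odd; rewrite /= ?oppr0. Qed.

Lemma w2exp_fst x n : (w2exp p x n).1 = x.1 ^+ n.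
Proof. by elim: n => [|n IHn] //=; rewrite IHn exprS. Qed.

Lemma w2exp_snd x n : (w2exp p x n).2 = n%:R * x.1 ^+ (p * n.-1) * x.2.
Proof.
elim: n => [|n IHn]; first by rewrite /= !mul0r.
rewrite /= IHn w2exp_fst; case: n {IHn} => [|n] /=.
  by rewrite muln0 expr0 expr1n !mul0r mulr0 add0r !mul1r.
rewrite -!exprM !(mulnC _ p) mulnS exprD.
move: (x.1 ^+ p) (x.1 ^+ (p * n)) => a b; rewrite mulrS; ring.
Qed.

Lemma foldr_w2add_fst (s : seq (W2 k)) :
  (foldr (w2add p) (w2zero k) s).1 = \sum_(x <- s) x.1.
Proof. by elim: s => [|x s IHs] /=; rewrite ?big_nil ?big_cons ?IHs. Qed.

(* The Witt carry depends on the first components only. *)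
Lemma foldr_w2add_snd_sub (I : Type) (F G : I -> W2 k) (s : seq I) :
  (forall i, (F i).1 = (G i).1) ->
  (foldr (w2add p) (w2zero k) (map F s)).2 - (foldr (w2add p) (w2zero k) (map G s)).2
  = \sum_(i <- s) ((F i).2 - (G i).2).
Proof.
move=> eqFG; elim: s => [|i s IHs] /=; first by rewrite big_nil subrr.
rewrite big_cons -IHs !foldr_w2add_fst !big_map eqFG (eq_bigr _ (fun j _ => eqFG j)).
ring.
Qed.

Lemma w2unit_fst x : x.1 != 0 -> w2unit p x.
Proof.
move=> x1_neq0; exists (x.1^-1, - x.1^-1 ^+ p * x.2 * x.1^-1 ^+ p).
rewrite /w2mul /w2one /= mulfV //; congr (_, _).
have : x.1 ^+ p * x.1^-1 ^+ p = 1 by rewrite -exprMn mulfV ?expr1n.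
move: (x.1 ^+ p) (x.1^-1 ^+ p) => a b abK.
have -> : a * (- b * x.2 * b) + b * x.2 = (1 - a * b) * (b * x.2) by ring.
by rewrite abK subrr mul0r.
Qed.

(* In W_2(k), g h' - g' h = (g - g') (h - [c] g) is a product of two elements
   of V W_2(k), hence vanishes. *)
Lemma w2mul_inv_congr (c : k) g g' h h' u u' :
  g'.1 = g.1 -> h'.1 = h.1 -> h.1 = c * g.1 -> h.2 - h'.2 = c ^+ p * (g.2 - g'.2) ->
  w2mul p h u = w2one k -> w2mul p h' u' = w2one k -> w2mul p g u = w2mul p g' u'.
Proof.
move=> eq_g1 eq_h1 h1E dh; case: u u' => [u1 u2] [v1 v2].
rewrite /w2mul /w2one /= eq_g1 eq_h1 => -[hu1 hu2] [hv1 hv2].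
have h1_neq0 : h.1 != 0 by apply: contra_eq_neq hu1 => ->; rewrite mul0r eq_sym oner_eq0.
have eq_u1 : u1 = v1 by apply: (mulfI h1_neq0); rewrite hu1 hv1.
subst v1.
congr (_, _); apply: (mulIf (expf_neq0 p h1_neq0)); apply/eqP; rewrite -subr_eq0.
have -> : (g.1 ^+ p * u2 + u1 ^+ p * g.2) * h.1 ^+ p - (g.1 ^+ p * v2 + u1 ^+ p * g'.2) * h.1 ^+ p
    = g.1 ^+ p * (h.1 ^+ p * u2 + u1 ^+ p * h.2 - (h.1 ^+ p * v2 + u1 ^+ p * h'.2))
      + u1 ^+ p * (h.1 ^+ p * (g.2 - g'.2) - g.1 ^+ p * (h.2 - h'.2)) by ring.
by rewrite hu2 hv2 dh h1E exprMn subrr; apply/eqP; ring.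
Qed.

End W2Arithmetic.

Definition HDk_coef (k : fieldType) (P M i : nat) : k :=
  (HD_coef P M i)%:R * (- M%:R) ^+ (P - i * M).
Arguments HDk_coef {k}.

Definition HD_poly (k : fieldType) (P M : nat) : {poly k} :=
  \sum_(i < (P %/ M).+1) HDk_coef P M i *: 'X^(i * M).

Lemma HDk_horner (k : fieldType) P M (x : k) : HDk P M x = (HD_poly k P M).[x].
Proof. by rewrite horner_sum; apply: eq_bigr => i _; rewrite hornerZ hornerXn. Qed.

Lemma HD_coef_eq0 P M i : (0 < M)%N -> (P < i * M)%N -> HD_coef P M i = 0%N.
Proof.
case: M => [//|M] _ lt_P_iM; rewrite /HD_coef big_ord_recr /= bin_small ?muln0 //.
lia.
Qed.

Lemma HD_poly_widen (k : fieldType) P M n : (0 < M)%N -> (P %/ M < n)%N ->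
  HD_poly k P M = \sum_(i < n) HDk_coef P M i *: 'X^(i * M).
Proof.
move=> M_gt0 lt_PM_n.
rewrite /HD_poly (big_ord_widen n (fun i => HDk_coef P M i *: 'X^(i * M))) //.
rewrite big_mkcond; apply: eq_bigr => i _; case: ltnP => // le_i.
by rewrite /HDk_coef HD_coef_eq0 ?mul0r ?scale0r // -ltn_divLR.
Qed.

Lemma horner_deriv_HD_poly (k : fieldType) P M (x : k) :
  (HD_poly k P M)^`().[x] =
  \sum_(i < (P %/ M).+1) HDk_coef P M i * ((i * M)%:R * x ^+ (i * M).-1).
Proof.
rewrite /HD_poly raddf_sum horner_sum; apply: eq_bigr => i _.
by rewrite /= derivZ derivXn hornerZ hornerMn hornerXn mulr_natl.
Qed.

Definition HDW_term {k : fieldType} (p P M : nat) (x : W2 k) (i : nat) : W2 k :=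
  w2mul p (w2sign k (P - i * M))
    (w2mul p (w2nat k p (HD_coef P M i * M ^ (P - i * M))) (w2exp p x (i * M))).

Lemma HDW_foldr (k : fieldType) p P M (x : W2 k) :
  HDW p P M x = foldr (w2add p) (w2zero k) (map (HDW_term p P M x) (iota 0 (P %/ M).+1)).
Proof. by []. Qed.

Lemma HDW_term_fst (k : fieldType) p P M (x : W2 k) i :
  (HDW_term p P M x i).1 = HDk_coef P M i * x.1 ^+ (i * M).
Proof.
rewrite /= w2sign_fst w2nat_fst w2exp_fst /HDk_coef natrM natrX [(- M%:R) ^+ _]exprNn.
move: ((-1) ^+ _) (M%:R ^+ _) (_%:R) => a b c; ring.
Qed.

Lemma HDW_fst (k : fieldType) p P M (x : W2 k) : (HDW p P M x).1 = (HD_poly k P M).[x.1].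
Proof.
rewrite HDW_foldr foldr_w2add_fst big_map -HDk_horner.
change (iota 0 _) with (index_iota 0 (P %/ M).+1); rewrite big_mkord.
by apply: eq_bigr => i _; rewrite HDW_term_fst.
Qed.

Section HasseDworkModp.
Variables (k : fieldType) (p : nat).
Hypothesis pchar_k : p \in [pchar k].

Let p_gt0 : (0 < p)%N. Proof. exact/prime_gt0/(pcharf_prime pchar_k). Qed.

Lemma pchar_binDp n i : (i < p)%N -> 'C(n + p, i)%:R = 'C(n, i)%:R :> k.
Proof.
elim: n i => [|n IHn] [|i] lt_i_p; rewrite ?bin0 //.
  by rewrite add0n bin_lt_pcharf_0 // bin0n.
by rewrite addSn !binS !natrD !IHn // ltnW.
Qed.

Lemma HD_coef_double M i : (i < p)%N ->
  (HD_coef (2 * p).-1 M i)%:R = (HD_coef p.-1 M i)%:R :> k.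
Proof.
move=> lt_i_p.
have binE j : (j * i <= p.-1)%N ->
    'C((2 * p).-1 - j * i, i)%:R = 'C(p.-1 - j * i, i)%:R :> k.
  move=> le_ji; rewrite -[RHS]pchar_binDp //.
  by have -> : ((2 * p).-1 - j * i = p.-1 - j * i + p)%N by lia.
rewrite /HD_coef !natr_prod.
case: i lt_i_p binE => [|i] lt_i_p binE; first by apply: eq_bigr => j _; rewrite !bin0.
pose j0 := (p.-1 %/ i.+1)%N.
have le_j0 : (j0 * i.+1 <= p.-1)%N by apply: leq_trunc_div.
have [lt_j0_M | le_M_j0] := ltnP j0 M; last first.
  apply: eq_bigr => j _; apply: binE; apply: leq_trans le_j0.
  by rewrite leq_mul2r (ltnW (leq_trans (ltn_ord j) le_M_j0)) orbT.
(* Both products contain the factor 'C(p.-1 %% i.+1, i.+1) = 0. *)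
have bin_j0 : 'C(p.-1 - j0 * i.+1, i.+1) = 0%N.
  apply: bin_small; have := ltn_pmod p.-1 (ltn0Sn i).
  rewrite {1}(divn_eq p.-1 i.+1) -/j0; lia.
rewrite (bigD1 (Ordinal lt_j0_M)) // [RHS](bigD1 (Ordinal lt_j0_M)) //=.
by rewrite binE // bin_j0 !mul0r.
Qed.

Lemma HDk_coef_double M i : (0 < M)%N -> (i < p)%N ->
  HDk_coef (2 * p).-1 M i = - M%:R * HDk_coef p.-1 M i :> k.
Proof.
move=> M_gt0 lt_i_p; rewrite /HDk_coef HD_coef_double //.
have [le_iM | lt_iM] := leqP (i * M) p.-1; last first.
  by rewrite HD_coef_eq0 // !mul0r mulr0.
have -> : ((2 * p).-1 - i * M = (p.-1 - i * M) + p)%N by lia.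
rewrite exprD -(pFrobenius_autE pchar_k) pFrobenius_autN pFrobenius_aut_nat.
by rewrite mulrA mulrC.
Qed.

Lemma HD_poly_double M : (1 < M)%N ->
  HD_poly k (2 * p).-1 M = - M%:R *: HD_poly k p.-1 M.
Proof.
move=> M_gt1; have M_gt0 : (0 < M)%N by exact: ltnW.
have lt_div_p P : (P <= (2 * p).-1)%N -> (P %/ M < p)%N.
  by move=> le_P; rewrite ltn_divLR //; nia.
rewrite !(@HD_poly_widen _ _ _ p) ?lt_div_p //; last lia.
by rewrite scaler_sumr; apply: eq_bigr => i _; rewrite scalerA HDk_coef_double.
Qed.

Lemma HDW_term_snd_sub P M (x y : W2 k) i : x.1 = y.1 ->
  (HDW_term p P M x i).2 - (HDW_term p P M y i).2 =
  (HDk_coef P M i * ((i * M)%:R * x.1 ^+ (i * M).-1)) ^+ p * (x.2 - y.2).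
Proof.
move=> eq_xy1; rewrite /= !w2exp_fst !w2exp_snd eq_xy1 w2sign_snd w2sign_fst w2nat_fst.
rewrite /HDk_coef natrM natrX [(- M%:R) ^+ _]exprNn !exprMn.
rewrite -(pFrobenius_autE pchar_k ((i * M)%:R)) pFrobenius_aut_nat.
rewrite -[y.1 ^+ (i * M).-1 ^+ p]exprM [((i * M).-1 * p)%N]mulnC.
ring.
Qed.

Lemma HDW_snd_sub P M (x y : W2 k) : x.1 = y.1 ->
  (HDW p P M x).2 - (HDW p P M y).2 = (HD_poly k P M)^`().[x.1] ^+ p * (x.2 - y.2).
Proof.
move=> eq_xy1; rewrite !HDW_foldr foldr_w2add_snd_sub; last first.
  by move=> i; rewrite !HDW_term_fst eq_xy1.
rewrite horner_deriv_HD_poly -(pFrobenius_autE pchar_k) rmorph_sum big_distrl.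
change (iota 0 _) with (index_iota 0 (P %/ M).+1); rewrite big_mkord.
by apply: eq_bigr => i _; rewrite HDW_term_snd_sub // pFrobenius_autE.
Qed.

End HasseDworkModp.

Theorem corollary3p11 (k : fieldType) (p N : nat)
  (hchar : p \in [pchar k]) (hp : (2 < p)%N) (hperf : perfect_field k p)
  (hN : (2 <= N)%N) (hpN : ~~ (p %| N.+1)%N) (eta : W2 k) :
  HDk (p.-1) N.+1 eta.1 != 0 ->
  @w2unit k p (HDW p (2 * p).-1 N.+1 eta) /\
  (forall (eta' : W2 k) (u u' : W2 k),
     eta'.1 = eta.1 ->
     @w2mul k p (HDW p (2 * p).-1 N.+1 eta) u = @w2one k ->
     @w2mul k p (HDW p (2 * p).-1 N.+1 eta') u' = @w2one k ->
     @w2mul k p (HDW p p.-1 N.+1 eta) u = @w2mul k p (HDW p p.-1 N.+1 eta') u').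
Proof.
rewrite HDk_horner => HD_neq0.
have M_gt1 : (1 < N.+1)%N by apply: ltnW.
have M_neq0 : N.+1%:R != 0 :> k by rewrite -(dvdn_pcharf hchar).
have HDW_double_fst (x : W2 k) :
    (HDW p (2 * p).-1 N.+1 x).1 = - N.+1%:R * (HDW p p.-1 N.+1 x).1.
  by rewrite !HDW_fst HD_poly_double // hornerZ.
split.
  by apply: w2unit_fst; rewrite HDW_double_fst HDW_fst mulf_neq0 ?oppr_eq0.
move=> eta' u u' eq_eta1; apply: (w2mul_inv_congr _ _ (- N.+1%:R)).
- by rewrite !HDW_fst eq_eta1.
- by rewrite !HDW_fst eq_eta1.
- exact: HDW_double_fst.
- by rewrite !HDW_snd_sub // HD_poly_double // derivZ hornerZ exprMn mulrA.
Qed.
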